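(* There exists $k_0>0$ such that for every $k\ge k_0$ the following hold. (i) For every $\varepsilon\in(0,1)$ there exists a positive entire radial solution $u$ of the initial value problem $$\Delta^3u=-\frac{1}{u^3},\quad u(0)=k,\quad \Delta u(0)=-\varepsilon,\quad \Delta^2u(0)=1,\quad u'(0)=(\Delta u)'(0)=(\Delta^2u)'(0)=0. \tag{P}$$ (ii) If $u$ is a positive entire radial solution of (P) for some $\varepsilon\in\mathbb{R}$, then necessarily $\varepsilon\le\sqrt{6k/5}$, and $$k-\frac{\varepsilon}{6}r^2\le u(r)\le k-\frac{\varepsilon}{6}r^2+\frac{r^4}{120}\quad\text{for all } r\in(0,\infty).$$
   Context: A radial function on $\mathbb{R}^3$ is written $u(r)$, $r=|x|$; for radial functions $\Delta w=w''+\frac{2}{r}w'$. A positive entire radial solution of (P) is a radial function $u$ defined and positive on all of $\mathbb{R}^3$ (i.e. $r\in[0,\infty)$), smooth, solving the ODE with the stated initial conditions at $r=0$. *)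

From Stdlib Require Import Reals.
From Coquelicot Require Import Coquelicot.
Open Scope R_scope.

Definition smooth (f : R -> R) : Prop :=
  forall (n : nat) (x : R), ex_derive_n f n x.

(* Radial Laplacian on R^3 acting on the profile w(r), r = |x|:
   Delta w = w'' + (2/r) w' for r <> 0; at r = 0 its value (the value at the
   origin of the Laplacian of the smooth radial function) is 3 w''(0). *)
Definition lap (w : R -> R) (r : R) : R :=
  if Req_EM_T r 0 then 3 * Derive_n w 2 0
  else Derive_n w 2 r + 2 / r * Derive w r.

(* u is (the profile of) a positive entire radial solution of (P) with
   parameters k and eps.  A smooth radial function on R^3 is exactly one
   whose profile is an even smooth function on R. *)
Definition entire_radial_solution (k eps : R) (u : R -> R) : Prop :=
  smooth u /\
  (forall r, u (- r) = u r) /\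
  (forall r, 0 <= r -> 0 < u r) /\
  (forall r, 0 <= r -> lap (lap (lap u)) r = - / (u r ^ 3)) /\
  u 0 = k /\ lap u 0 = - eps /\ lap (lap u) 0 = 1 /\
  Derive u 0 = 0 /\ Derive (lap u) 0 = 0 /\ Derive (lap (lap u)) 0 = 0.

From Stdlib Require Import Reals Psatz FunctionalExtensionality.
From Coquelicot Require Import Coquelicot.
Open Scope R_scope.

(* Write [lapinv g r = RInt (fun t => t^-2 * RInt (fun s => s^2 * g s) 0 t) 0 r] for the
   inverse of the radial Laplacian: a smooth profile with [f'(0) = 0] satisfies
   [f = f 0 + lapinv (lap f)], and [lapinv] is monotone.  Hence (P) is the fixed-point problem
   [u = k + lapinv (-eps + lapinv (1 + lapinv (- u^-3)))].

   (ii) Since [lap^3 u = - u^-3 < 0], monotonicity gives [lap^2 u <= 1] and the upper bound on [u].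
   If [lap^2 u] ever became negative it would stay below some [-d < 0], and then
   [u r <= k + C r^2 - d r^4 / 120] would become negative; so [lap^2 u >= 0], which gives the
   lower bound.  At [r^2 = 10 eps] the upper bound reads [k - 5 eps^2 / 6], whence the bound on [eps].

   (i) Truncate the nonlinearity below at the barrier [k/2 + r^4/480], which makes it globally
   Lipschitz.  In the weighted norm [sup |u r| exp (- r^2)], [lapinv] has norm at most [1/6], so
   the Picard iteration converges.  For [k >= 242] the truncated nonlinearity is dominated by
   [(1 + r^2)^(-5/2)], whose [lapinv] is below [1/3]; this keeps the image of the iteration map
   above [k - eps r^2/6 + r^4/240], hence its fixed point above the barrier, so the truncation is
   inactive and the fixed point solves (P). *)

Fixpoint Cn (n : nat) (f : R -> R) : Prop :=
  match n with
  | O => forall x, continuous f x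
  | S n => (forall x, ex_derive f x) /\ Cn n (Derive f)
  end.

Lemma Cn_ext n : forall f g, (forall x, f x = g x) -> Cn n f -> Cn n g.
Proof.
  induction n as [|n IH]; simpl; intros f g E Hf.
  - intros x. exact (continuous_ext f g x E (Hf x)).
  - destruct Hf as [Df Hf]. split.
    + intros x. exact (ex_derive_ext f g x E (Df x)).
    + apply (IH (Derive f)); [intros x; apply Derive_ext, E | exact Hf].
Qed.

Lemma C0_of_derivable f : (forall x, ex_derive f x) -> Cn 0 f.
Proof. intros Df x. exact (ex_derive_continuous f x (Df x)). Qed.

Lemma Cn_S n : forall f, Cn (S n) f -> Cn n f.
Proof.
  induction n as [|n IH]; intros f [Df Hf].
  - exact (C0_of_derivable f Df).
  - split; [exact Df | exact (IH _ Hf)].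
Qed.

Lemma Cn_C0 n f : Cn n f -> Cn 0 f.
Proof. induction n; [auto | intros H; apply IHn, Cn_S, H]. Qed.

Lemma Cn_const n c : Cn n (fun _ => c).
Proof.
  revert c; induction n as [|n IH]; simpl; intros c.
  - intros x. apply continuous_const.
  - split; [intros x; apply ex_derive_const |].
    apply (Cn_ext n (fun _ => 0)); [intros x; symmetry; apply Derive_const | apply IH].
Qed.

Lemma Cn_id n : Cn n (fun x => x).
Proof.
  destruct n as [|n]; simpl.
  - intros x. apply continuous_id.
  - split; [intros x; apply ex_derive_id |].
    apply (Cn_ext n (fun _ => 1)); [intros x; symmetry; apply Derive_id | apply Cn_const].
Qed.

Lemma Cn_plus n : forall f g, Cn n f -> Cn n g -> Cn n (fun x => f x + g x).
Proof.
  induction n as [|n IH]; simpl; intros f g Hf Hg.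
  - intros x. exact (continuous_plus f g x (Hf x) (Hg x)).
  - destruct Hf as [Df Hf], Hg as [Dg Hg]. split.
    + intros x. exact (ex_derive_plus f g x (Df x) (Dg x)).
    + apply (Cn_ext n (fun x => Derive f x + Derive g x)); [| exact (IH _ _ Hf Hg)].
      intros x. symmetry. exact (Derive_plus f g x (Df x) (Dg x)).
Qed.

Lemma Cn_mult n : forall f g, Cn n f -> Cn n g -> Cn n (fun x => f x * g x).
Proof.
  induction n as [|n IH]; intros f g Hf Hg.
  - intros x. exact (continuous_mult f g x (Hf x) (Hg x)).
  - pose proof (Cn_S _ _ Hf) as Hf'. pose proof (Cn_S _ _ Hg) as Hg'.
    destruct Hf as [Df Hf], Hg as [Dg Hg]. split.
    + intros x. exact (ex_derive_mult f g x (Df x) (Dg x)).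
    + apply (Cn_ext n (fun x => Derive f x * g x + f x * Derive g x)).
      * intros x. symmetry. exact (Derive_mult f g x (Df x) (Dg x)).
      * apply Cn_plus; apply IH; assumption.
Qed.

Lemma Cn_scal n c f : Cn n f -> Cn n (fun x => c * f x).
Proof. apply Cn_mult, Cn_const. Qed.

Lemma Cn_minus n f g : Cn n f -> Cn n g -> Cn n (fun x => f x - g x).
Proof.
  intros Hf Hg. apply (Cn_ext n (fun x => f x + - 1 * g x)); [intros x; ring |].
  apply Cn_plus, Cn_scal; assumption.
Qed.

Lemma C0_comp_scale g r : Cn 0 g -> Cn 0 (fun s => g (r * s)).
Proof.
  intros Hg x. apply (continuous_comp (fun s => r * s) g); [apply (Cn_scal 0 r _ (Cn_id 0)) | apply Hg].
Qed.

Lemma C0_comp_opp g : Cn 0 g -> Cn 0 (fun t => g (- t)).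
Proof.
  intros Hg. apply (Cn_ext 0 (fun t => g (- 1 * t))); [intros t; f_equal; ring |].
  apply C0_comp_scale, Hg.
Qed.

Lemma Cn_inv n : forall f, Cn n f -> (forall x, f x <> 0) -> Cn n (fun x => / f x).
Proof.
  induction n as [|n IH]; intros f Hf Hnz.
  - intros x. apply continuity_pt_filterlim, continuity_pt_inv; [| apply Hnz].
    apply continuity_pt_filterlim, Hf.
  - pose proof (Cn_S _ _ Hf) as Hf'. destruct Hf as [Df Hf]. split.
    + intros x. exact (ex_derive_inv f x (Df x) (Hnz x)).
    + apply (Cn_ext n (fun x => - 1 * (Derive f x * (/ f x * / f x)))).
      * intros x. rewrite Derive_inv by auto. field. apply Hnz.
      * apply Cn_scal, Cn_mult; [exact Hf | apply Cn_mult; apply IH; assumption].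
Qed.

Lemma Cn_neg_inv_cube n u : Cn n u -> (forall t, 0 < u t) -> Cn n (fun t => - / u t ^ 3).
Proof.
  intros Hu Hpos. apply (Cn_ext n (fun t => - 1 * / (u t * (u t * u t)))).
  - intros t. simpl. rewrite Rmult_1_r. field. apply Rgt_not_eq, Hpos.
  - apply Cn_scal, Cn_inv; [apply Cn_mult; [| apply Cn_mult]; exact Hu |].
    intros t. pose proof (Hpos t). apply Rgt_not_eq. apply Rmult_lt_0_compat; nra.
Qed.

Lemma Derive_n_Derive f n x : Derive_n (Derive f) n x = Derive_n f (S n) x.
Proof.
  revert x; induction n as [|n IH]; intros x; [reflexivity |].
  apply Derive_ext, IH.
Qed.

Lemma smooth_iff_Cn f : smooth f <-> forall n, Cn n f.
Proof.
  split.
  - intros Hs n. revert f Hs. induction n as [|n IH]; intros f Hs.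
    + exact (C0_of_derivable f (Hs 1%nat)).
    + split; [exact (Hs 1%nat) |]. apply IH. intros [|m] x; [exact I |].
      apply (ex_derive_ext (Derive_n f (S m))); [intros t; symmetry; apply Derive_n_Derive |].
      exact (Hs (S (S m)) x).
  - intros HC [|n]; [intros x; exact I |]. revert f HC. induction n as [|n IH]; intros f HC x.
    + exact (proj1 (HC 1%nat) x).
    + apply (ex_derive_ext (Derive_n (Derive f) n)); [apply Derive_n_Derive |].
      apply (IH (Derive f)). intros m. exact (proj2 (HC (S m))).
Qed.


Lemma continuous_of_eps_delta (f : R -> R) x :
  (forall e : posreal, exists d : posreal, forall y, Rabs (y - x) < d -> Rabs (f y - f x) < e) ->
  continuous f x.
Proof.
  intros H. apply filterlim_locally. intros e. destruct (H e) as [d Hd]. exists d. apply Hd.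
Qed.

Lemma ex_RInt_C0 f a b : Cn 0 f -> ex_RInt f a b.
Proof. intros Hf. apply (@ex_RInt_continuous R_CompleteNormedModule). intros z _. apply Hf. Qed.

Lemma RInt_minusR (f g : R -> R) a b : ex_RInt f a b -> ex_RInt g a b ->
  RInt (fun x => f x - g x) a b = RInt f a b - RInt g a b.
Proof. apply (@RInt_minus R_CompleteNormedModule). Qed.

Lemma RInt_plusR (f g : R -> R) a b : ex_RInt f a b -> ex_RInt g a b ->
  RInt (fun x => f x + g x) a b = RInt f a b + RInt g a b.
Proof. apply (@RInt_plus R_CompleteNormedModule). Qed.

Lemma RInt_scalR (f : R -> R) a b c : ex_RInt f a b ->
  RInt (fun x => c * f x) a b = c * RInt f a b.
Proof. apply (@RInt_scal R_CompleteNormedModule). Qed.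

Lemma RInt_FTC (f F : R -> R) a b :
  (forall x, is_derive F x (f x)) -> Cn 0 f -> RInt f a b = F b - F a.
Proof.
  intros HF Hf. apply is_RInt_unique, (is_RInt_derive F f); intros x _; [apply HF | apply Hf].
Qed.

Lemma RInt_scale_01 (h : R -> R) r : Cn 0 h ->
  RInt h 0 r = r * RInt (fun s => h (r * s)) 0 1.
Proof.
  intros Hh. rewrite <- RInt_scalR by (apply ex_RInt_C0, C0_comp_scale, Hh).
  pose proof (RInt_comp_lin h r 0 0 1 (ex_RInt_C0 h _ _ Hh)) as E.
  rewrite Rmult_0_r, Rmult_1_r, !Rplus_0_r in E. rewrite <- E.
  apply RInt_ext. intros s _. rewrite Rplus_0_r. reflexivity.
Qed.

Lemma RInt_extR (f g : R -> R) a b : (forall x, f x = g x) -> RInt f a b = RInt g a b.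
Proof. intros H. apply RInt_ext. intros x _. apply H. Qed.

Definition wmean (j : nat) (g : R -> R) (x : R) : R :=
  RInt (fun s => s ^ j * g (x * s)) 0 1.

Lemma C0_pow j : Cn 0 (fun s => s ^ j).
Proof. apply C0_of_derivable. intros s. auto_derive. exact I. Qed.

Lemma C0_wmean_integrand j g x : Cn 0 g -> Cn 0 (fun s => s ^ j * g (x * s)).
Proof.
  intros Hg. apply Cn_mult; [apply C0_pow | apply C0_comp_scale, Hg].
Qed.

Lemma ex_RInt_wmean j g x : Cn 0 g -> ex_RInt (fun s => s ^ j * g (x * s)) 0 1.
Proof. intros Hg. apply ex_RInt_C0, C0_wmean_integrand, Hg. Qed.

Lemma C0_wmean j g : Cn 0 g -> Cn 0 (wmean j g).
Proof.
  intros Hg x. apply continuous_of_eps_delta. intros e.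
  set (a := Rabs x + 1).
  assert (He2 : 0 < e / 2) by (pose proof (cond_pos e); lra).
  destruct (unifcont_normed_1d g (- a) a (fun z _ => Hg z) (mkposreal _ He2)) as [d Hd].
  assert (Hd1 : 0 < Rmin 1 d) by (apply Rmin_pos; [lra | apply cond_pos]).
  exists (mkposreal _ Hd1). intros y Hy. simpl in Hy.
  assert (Hy1 : Rabs (y - x) < 1) by (eapply Rlt_le_trans; [exact Hy | apply Rmin_l]).
  assert (Hyd : Rabs (y - x) < d) by (eapply Rlt_le_trans; [exact Hy | apply Rmin_r]).
  assert (Hya : Rabs y <= a) by (unfold a; pose proof (Rabs_triang_inv y x); lra).
  unfold wmean. rewrite <- RInt_minusR by (apply ex_RInt_wmean, Hg).
  eapply Rle_lt_trans.
  { apply abs_RInt_le_const with (M := e / 2);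
      [lra | apply ex_RInt_C0, Cn_minus; apply C0_wmean_integrand, Hg |].
    intros s Hs. rewrite <- Rmult_minus_distr_l, Rabs_mult.
    assert (Hsj : Rabs (s ^ j) <= 1).
    { rewrite Rabs_pos_eq by (apply pow_le; lra). rewrite <- (pow1 j). apply pow_incr. lra. }
    assert (Hgs : Rabs (g (y * s) - g (x * s)) < e / 2).
    { apply (Hd (x * s) (y * s)).
      - apply Rabs_le_between. rewrite Rabs_mult, (Rabs_pos_eq s) by lra.
        pose proof (Rabs_pos x). unfold a. nra.
      - apply Rabs_le_between. rewrite Rabs_mult, (Rabs_pos_eq s) by lra.
        pose proof (Rabs_pos y). nra.
      - change (Rabs (y * s - x * s) < d).
        rewrite <- Rmult_minus_distr_r, Rabs_mult, (Rabs_pos_eq s) by lra.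
        pose proof (Rabs_pos (y - x)). nra. }
    pose proof (Rabs_pos (g (y * s) - g (x * s))). nra. }
  simpl. lra.
Qed.

Lemma is_derive_wmean j g x : Cn 1 g -> is_derive (wmean j g) x (wmean (S j) (Derive g) x).
Proof.
  intros [Dg Hg']. unfold wmean.
  assert (HD : forall s y, is_derive (fun z => s ^ j * g (z * s)) y (s ^ S j * Derive g (y * s))).
  { intros s y. auto_derive; [apply Dg |]. change (Derive (fun t => g t)) with (Derive g). simpl. ring. }
  rewrite (RInt_ext _ (fun s => Derive (fun z => s ^ j * g (z * s)) x))
    by (intros s _; symmetry; apply is_derive_unique, HD).
  apply (is_derive_RInt_param (fun z s => s ^ j * g (z * s))).
  - apply filter_forall. intros y s _. eexists. apply HD.
  - intros s _. apply continuity_2d_pt_ext with (f := fun z s => s ^ S j * Derive g (z * s)).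
    { intros z t. symmetry. apply is_derive_unique, HD. }
    apply continuity_2d_pt_mult.
    + apply continuity_1d_2d_pt_comp with (f := fun t => t ^ S j) (g := fun _ t => t);
        [apply derivable_continuous_pt, derivable_pt_pow | apply continuity_2d_pt_id2].
    + apply continuity_1d_2d_pt_comp with (f := Derive g) (g := fun z t => z * t);
        [apply continuity_pt_filterlim, Hg' |].
      apply continuity_2d_pt_mult; [apply continuity_2d_pt_id1 | apply continuity_2d_pt_id2].
  - apply filter_forall. intros y. apply ex_RInt_wmean, C0_of_derivable, Dg.
Qed.

Lemma Cn_wmean n : forall j g, Cn n g -> Cn n (wmean j g).
Proof.
  induction n as [|n IH]; intros j g Hg; [apply C0_wmean, Hg |].
  assert (H1 : Cn 1 g) by (split; [apply Hg | apply (Cn_C0 n), Hg]).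
  split.
  - intros x. eexists. apply is_derive_wmean, H1.
  - apply (Cn_ext n (wmean (S j) (Derive g))); [| apply IH, Hg].
    intros x. symmetry. apply is_derive_unique, is_derive_wmean, H1.
Qed.

Lemma wmean_at_0 j g : wmean j g 0 = g 0 / INR (S j).
Proof.
  unfold wmean. rewrite (RInt_ext _ (fun s => s ^ j * g 0)) by (intros s _; rewrite Rmult_0_l; reflexivity).
  rewrite (RInt_FTC _ (fun s => g 0 * s ^ S j / INR (S j))).
  - rewrite pow1, pow_i by lia. field. apply not_0_INR. lia.
  - intros s. auto_derive; [exact I |]. change (match j with O => 1 | S _ => INR j + 1 end) with (INR (S j)).
    field. apply not_0_INR. lia.
  - apply Cn_mult; [apply C0_pow | apply Cn_const].
Qed.

Lemma wmean_plus j f g x : Cn 0 f -> Cn 0 g ->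
  wmean j (fun t => f t + g t) x = wmean j f x + wmean j g x.
Proof.
  intros Hf Hg. unfold wmean. rewrite <- RInt_plusR by (apply ex_RInt_wmean; assumption).
  apply RInt_extR. intros s. ring.
Qed.

Lemma wmean_scal j c f x : Cn 0 f -> wmean j (fun t => c * f t) x = c * wmean j f x.
Proof.
  intros Hf. unfold wmean. rewrite <- RInt_scalR by (apply ex_RInt_wmean, Hf).
  apply RInt_extR. intros s. ring.
Qed.

Lemma wmean_le j f g x : 0 <= x -> Cn 0 f -> Cn 0 g ->
  (forall t, 0 <= t <= x -> f t <= g t) -> wmean j f x <= wmean j g x.
Proof.
  intros Hx Hf Hg Hfg. unfold wmean. apply RInt_le; [lra | apply ex_RInt_wmean, Hf | apply ex_RInt_wmean, Hg |].
  intros s Hs. apply Rmult_le_compat_l; [apply pow_le; lra |]. apply Hfg. nra.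
Qed.

(* [flux g r = r^-2 * RInt (s^2 g s) 0 r] (lemma [flux_eq]); the rescaled form makes its
   regularity at [r = 0] visible. *)
Definition flux (g : R -> R) (r : R) : R := r * wmean 2 g r.

Definition lapinv (g : R -> R) (r : R) : R := RInt (flux g) 0 r.

Lemma Cn_flux n g : Cn n g -> Cn n (flux g).
Proof. intros Hg. apply Cn_mult; [apply Cn_id | apply Cn_wmean, Hg]. Qed.

Lemma flux_eq g r : Cn 0 g -> r <> 0 -> flux g r = / r ^ 2 * RInt (fun s => s ^ 2 * g s) 0 r.
Proof.
  intros Hg Hr. rewrite RInt_scale_01 by (apply Cn_mult; [apply C0_pow | exact Hg]).
  unfold flux, wmean.
  rewrite (RInt_extR (fun s => (r * s) ^ 2 * g (r * s)) (fun s => r ^ 2 * (s ^ 2 * g (r * s))))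
    by (intros s; ring).
  rewrite RInt_scalR by (apply ex_RInt_wmean, Hg). field. exact Hr.
Qed.

Lemma is_derive_lapinv g r : Cn 0 g -> is_derive (lapinv g) r (flux g r).
Proof.
  intros Hg. apply (is_derive_RInt (flux g) (lapinv g) 0 r); [| apply (Cn_flux 0), Hg].
  apply filter_forall. intros b. apply (@RInt_correct R_CompleteNormedModule), ex_RInt_C0, (Cn_flux 0), Hg.
Qed.

Lemma is_derive_mult_id_0 (phi : R -> R) : continuous phi 0 -> is_derive (fun x => x * phi x) 0 (phi 0).
Proof.
  intros Hphi. apply is_derive_Reals. apply continuity_pt_filterlim in Hphi.
  intros e He. destruct (Hphi e He) as [d [Hd Hclose]].
  exists (mkposreal d Hd). intros h Hh Hhd. simpl in Hhd.
  rewrite Rplus_0_l, Rmult_0_l, Rminus_0_r.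
  replace (h * phi h / h) with (phi h) by (field; exact Hh).
  apply (Hclose h). split; [split; [exact I | auto] | simpl; unfold R_dist; rewrite Rminus_0_r; exact Hhd].
Qed.

Lemma is_derive_flux_0 g : Cn 0 g -> is_derive (flux g) 0 (g 0 / 3).
Proof.
  intros Hg. replace (g 0 / 3) with (wmean 2 g 0) by (rewrite wmean_at_0; simpl; field).
  apply is_derive_mult_id_0, C0_wmean, Hg.
Qed.

Lemma is_derive_flux g r : Cn 0 g -> r <> 0 -> is_derive (flux g) r (g r - 2 / r * flux g r).
Proof.
  intros Hg Hr.
  set (G := fun y => RInt (fun s => s ^ 2 * g s) 0 y).
  assert (Hsg : Cn 0 (fun s => s ^ 2 * g s)) by (apply Cn_mult; [apply C0_pow | exact Hg]).
  assert (HG : forall y, is_derive G y (y ^ 2 * g y)).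
  { intros y. apply (is_derive_RInt (fun s => s ^ 2 * g s) G 0 y); [| apply Hsg].
    apply filter_forall. intros b. apply (@RInt_correct R_CompleteNormedModule), ex_RInt_C0, Hsg. }
  apply is_derive_ext_loc with (f := fun y => / y ^ 2 * G y).
  - assert (Hr' : 0 < Rabs r) by (apply Rabs_pos_lt, Hr).
    exists (mkposreal _ Hr'). intros y Hy. change (Rabs (y - r) < Rabs r) in Hy.
    symmetry. apply flux_eq; [exact Hg |]. intros ->. rewrite Rminus_0_l, Rabs_Ropp in Hy. lra.
  - rewrite flux_eq by assumption. fold (G r).
    auto_derive.
    { split; [rewrite Rmult_1_r; apply Rmult_integral_contrapositive; auto |].
      split; [eexists; apply HG | exact I]. }
    change (fun x => G x) with G. rewrite (is_derive_unique _ _ _ (HG r)). field. exact Hr.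
Qed.

Lemma lapinv_0 g : lapinv g 0 = 0.
Proof. apply (@RInt_point R_CompleteNormedModule). Qed.

Lemma flux_0 g : flux g 0 = 0.
Proof. unfold flux. ring. Qed.

Lemma is_derive_lapinv_shift c g r : Cn 0 g -> is_derive (fun x => c + lapinv g x) r (flux g r).
Proof.
  intros Hg. pose proof (is_derive_lapinv g r Hg) as H.
  auto_derive; [eexists; exact H |]. change (fun x => lapinv g x) with (lapinv g).
  rewrite (is_derive_unique _ _ _ H). ring.
Qed.

Lemma Derive_lapinv c g r : Cn 0 g -> Derive (fun x => c + lapinv g x) r = flux g r.
Proof. intros Hg. apply is_derive_unique, is_derive_lapinv_shift, Hg. Qed.

Lemma lap_lapinv c g : Cn 0 g -> lap (fun x => c + lapinv g x) = g.
Proof.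
  intros Hg. apply functional_extensionality. intros r.
  assert (D2 : forall x, Derive_n (fun x => c + lapinv g x) 2 x = Derive (flux g) x).
  { intros x. apply Derive_ext. intros y. apply Derive_lapinv, Hg. }
  unfold lap. rewrite !D2.
  destruct (Req_EM_T r 0) as [-> | Hr].
  - rewrite (is_derive_unique _ _ _ (is_derive_flux_0 g Hg)). field.
  - rewrite (is_derive_unique _ _ _ (is_derive_flux g r Hg Hr)), Derive_lapinv by exact Hg. field. exact Hr.
Qed.

Lemma Cn_lapinv n c g : Cn n g -> Cn (S n) (fun x => c + lapinv g x).
Proof.
  intros Hg. pose proof (Cn_C0 n g Hg) as Hg0. split.
  - intros x. eexists. apply is_derive_lapinv_shift, Hg0.
  - apply (Cn_ext n (flux g)); [| apply Cn_flux, Hg].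
    intros x. symmetry. apply Derive_lapinv, Hg0.
Qed.

Lemma C0_lapinv_shift c g : Cn 0 g -> Cn 0 (fun x => c + lapinv g x).
Proof. intros Hg. exact (Cn_S 0 _ (Cn_lapinv 0 c g Hg)). Qed.

(* As [f'(0) = 0], [f'(r) / r] is the mean of [f''] over [[0, r]]. *)
Lemma lap_eq_wmean f r : Cn 2 f -> Derive f 0 = 0 ->
  lap f r = Derive (Derive f) r + 2 * wmean 0 (Derive (Derive f)) r.
Proof.
  intros [Df [DDf Hf2]] Hf0. change (Cn 0 (Derive (Derive f))) in Hf2.
  unfold lap. change (Derive_n f 2 ?x) with (Derive (Derive f) x).
  destruct (Req_EM_T r 0) as [-> | Hr].
  - rewrite wmean_at_0. simpl. field.
  - f_equal. assert (Hint : Derive f r = RInt (Derive (Derive f)) 0 r).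
    { rewrite RInt_Derive; [lra | intros; apply DDf | intros; apply Hf2]. }
    rewrite Hint, RInt_scale_01 by exact Hf2. unfold wmean.
    rewrite (RInt_extR (fun s => s ^ 0 * _) (fun s => Derive (Derive f) (r * s))) by (intros s; ring).
    field. exact Hr.
Qed.

Lemma Cn_lap n f : Cn (S (S n)) f -> Derive f 0 = 0 -> Cn n (lap f).
Proof.
  intros Hf Hf0. apply (Cn_ext n (fun r => Derive (Derive f) r + 2 * wmean 0 (Derive (Derive f)) r)).
  - intros r. symmetry. apply lap_eq_wmean; [| exact Hf0].
    destruct Hf as [Df [DDf Hf2]]. repeat split; [exact Df | exact DDf | exact (Cn_C0 n _ Hf2)].
  - destruct Hf as [_ [_ Hf2]]. apply Cn_plus; [exact Hf2 | apply Cn_scal, Cn_wmean, Hf2].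
Qed.

(* [(r^2 f')' = r^2 lap f]. *)
Lemma flux_lap f r : Cn 2 f -> Derive f 0 = 0 -> flux (lap f) r = Derive f r.
Proof.
  intros Hf Hf0. pose proof (Cn_lap 0 f Hf Hf0) as Hl. destruct Hf as [Df [DDf _]].
  destruct (Req_dec r 0) as [-> | Hr]; [rewrite flux_0; symmetry; exact Hf0 |].
  rewrite flux_eq by assumption.
  rewrite (RInt_FTC _ (fun s => s ^ 2 * Derive f s)); [simpl; field; exact Hr | |].
  - intros s. replace (s ^ 2 * lap f s) with (2 * s * Derive f s + s ^ 2 * Derive (Derive f) s).
    + auto_derive; [apply DDf |]. change (Derive (fun x => Derive f x)) with (Derive (Derive f)). ring.
    + unfold lap. change (Derive_n f 2 s) with (Derive (Derive f) s).
      destruct (Req_EM_T s 0) as [-> | Hs]; [ring | field; exact Hs].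
  - apply Cn_mult; [apply C0_pow | exact Hl].
Qed.

Lemma lapinv_lap f r : Cn 2 f -> Derive f 0 = 0 -> f r = f 0 + lapinv (lap f) r.
Proof.
  intros Hf Hf0. unfold lapinv. rewrite (RInt_extR _ (Derive f)) by (intros t; apply flux_lap; assumption).
  destruct Hf as [Df [DDf _]].
  rewrite RInt_Derive; [ring | intros; apply Df | intros; apply (C0_of_derivable _ DDf)].
Qed.

Lemma ex_RInt_flux g a b : Cn 0 g -> ex_RInt (flux g) a b.
Proof. intros Hg. apply ex_RInt_C0, (Cn_flux 0), Hg. Qed.

Lemma lapinv_plus f g r : Cn 0 f -> Cn 0 g ->
  lapinv (fun t => f t + g t) r = lapinv f r + lapinv g r.
Proof.
  intros Hf Hg. unfold lapinv. rewrite <- RInt_plusR by (apply ex_RInt_flux; assumption).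
  apply RInt_extR. intros t. unfold flux. rewrite wmean_plus by assumption. ring.
Qed.

Lemma lapinv_scal c g r : Cn 0 g -> lapinv (fun t => c * g t) r = c * lapinv g r.
Proof.
  intros Hg. unfold lapinv. rewrite <- RInt_scalR by (apply ex_RInt_flux, Hg).
  apply RInt_extR. intros t. unfold flux. rewrite wmean_scal by exact Hg. ring.
Qed.

Lemma lapinv_ext f g r : (forall t, f t = g t) -> lapinv f r = lapinv g r.
Proof. intros H. apply functional_extensionality in H. subst. reflexivity. Qed.

Lemma lapinv_minus f g r : Cn 0 f -> Cn 0 g ->
  lapinv (fun t => f t - g t) r = lapinv f r - lapinv g r.
Proof.
  intros Hf Hg. rewrite (lapinv_ext _ (fun t => f t + - 1 * g t)) by (intros t; ring).
  rewrite lapinv_plus, lapinv_scal by (try apply Cn_scal; assumption). ring.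
Qed.

Lemma lapinv_le f g r : 0 <= r -> Cn 0 f -> Cn 0 g ->
  (forall t, 0 <= t <= r -> f t <= g t) -> lapinv f r <= lapinv g r.
Proof.
  intros Hr Hf Hg Hfg. unfold lapinv.
  apply RInt_le; [exact Hr | apply ex_RInt_flux, Hf | apply ex_RInt_flux, Hg |].
  intros t Ht. unfold flux. apply Rmult_le_compat_l; [lra |].
  apply wmean_le; [lra | exact Hf | exact Hg |]. intros s Hs. apply Hfg. lra.
Qed.

Lemma wmean_quadratic a b x : wmean 2 (fun t => a + b * t ^ 2) x = a / 3 + b * x ^ 2 / 5.
Proof.
  unfold wmean. rewrite (RInt_FTC _ (fun s => a * s ^ 3 / 3 + b * x ^ 2 * s ^ 5 / 5)).
  - field.
  - intros s. auto_derive; [exact I | field].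
  - apply C0_of_derivable. intros s. auto_derive. exact I.
Qed.

Lemma lapinv_quadratic a b r : lapinv (fun t => a + b * t ^ 2) r = a * r ^ 2 / 6 + b * r ^ 4 / 20.
Proof.
  unfold lapinv. rewrite (RInt_extR _ (fun t => a * t / 3 + b * t ^ 3 / 5))
    by (intros t; unfold flux; rewrite wmean_quadratic; field).
  rewrite (RInt_FTC _ (fun t => a * t ^ 2 / 6 + b * t ^ 4 / 20)).
  - field.
  - intros s. auto_derive; [exact I | field].
  - apply C0_of_derivable. intros s. auto_derive. exact I.
Qed.

Lemma lapinv_const c r : lapinv (fun _ => c) r = c * r ^ 2 / 6.
Proof.
  rewrite (lapinv_ext _ (fun t => c + 0 * t ^ 2)) by (intros t; ring).
  rewrite lapinv_quadratic. field.
Qed.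

Lemma lapinv_antitone g a b : Cn 0 g -> (forall t, 0 <= t -> g t <= 0) -> 0 <= a <= b ->
  lapinv g b <= lapinv g a.
Proof.
  intros Hg Hneg Hab. unfold lapinv.
  rewrite <- (RInt_Chasles (V := R_CompleteNormedModule) (flux g) 0 a b) by (apply ex_RInt_flux, Hg).
  assert (RInt (flux g) a b <= RInt (fun _ => 0) a b).
  { apply RInt_le; [lra | apply ex_RInt_flux, Hg | apply ex_RInt_const |].
    intros t Ht. unfold flux.
    assert (wmean 2 g t <= wmean 2 (fun s => 0 + 0 * s ^ 2) t).
    { apply wmean_le; [lra | exact Hg | apply C0_of_derivable; intros; auto_derive; exact I |].
      intros s Hs. rewrite Rmult_0_l, Rplus_0_l. apply Hneg. lra. }
    rewrite wmean_quadratic in H. nra. }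
  rewrite RInt_const in H. change (scal (b - a) 0) with ((b - a) * 0) in H.
  change (plus (RInt (flux g) 0 a) (RInt (flux g) a b)) with (RInt (flux g) 0 a + RInt (flux g) a b). lra.
Qed.

Lemma lapinv_opp g r : Cn 0 g -> lapinv g (- r) = lapinv (fun t => g (- t)) r.
Proof.
  intros Hg. unfold lapinv.
  pose proof (RInt_comp_lin (flux g) (- 1) 0 0 r (ex_RInt_flux g _ _ Hg)) as E.
  replace (- 1 * 0 + 0) with 0 in E by ring. replace (- 1 * r + 0) with (- r) in E by ring.
  rewrite <- E. apply RInt_extR. intros x. change (scal (- 1) ?y) with (- 1 * y).
  unfold flux, wmean.
  rewrite (RInt_extR (fun s => s ^ 2 * g ((- 1 * x + 0) * s)) (fun s => s ^ 2 * g (- (x * s))))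
    by (intros s; do 3 f_equal; ring).
  ring.
Qed.

Lemma lapinv_even g r : Cn 0 g -> (forall t, g (- t) = g t) -> lapinv g (- r) = lapinv g r.
Proof. intros Hg Heven. rewrite lapinv_opp by exact Hg. apply lapinv_ext, Heven. Qed.

Lemma lapinv_abs_le g h r : 0 <= r -> Cn 0 g -> Cn 0 h ->
  (forall t, 0 <= t <= r -> Rabs (g t) <= h t) -> Rabs (lapinv g r) <= lapinv h r.
Proof.
  intros Hr Hg Hh Hgh. apply Rabs_le. split.
  - rewrite <- (Rmult_1_l (lapinv h r)), Ropp_mult_distr_l, <- lapinv_scal by exact Hh.
    apply lapinv_le; [exact Hr | apply Cn_scal, Hh | exact Hg |].
    intros t Ht. pose proof (Rabs_le_between (g t) (h t)) as [B _]. specialize (B (Hgh t Ht)). lra.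
  - apply lapinv_le; [exact Hr | exact Hg | exact Hh |].
    intros t Ht. pose proof (Rle_abs (g t)). pose proof (Hgh t Ht). lra.
Qed.

Lemma exp_sq_ge_1 t : 1 <= exp (t ^ 2).
Proof. pose proof (exp_ineq1_le (t ^ 2)). pose proof (pow2_ge_0 t). lra. Qed.

Lemma exp_le_exp x y : x <= y -> exp x <= exp y.
Proof. intros [H | ->]; [left; apply exp_increasing, H | right; reflexivity]. Qed.

Lemma C0_exp_sq M : Cn 0 (fun t => M * exp (t ^ 2)).
Proof. apply C0_of_derivable. intros t. auto_derive. exact I. Qed.

Lemma lapinv_exp_sq M r : 0 <= M -> 0 <= r -> lapinv (fun t => M * exp (t ^ 2)) r <= M * exp (r ^ 2) / 6.
Proof.
  intros HM Hr. unfold lapinv.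
  apply Rle_trans with (RInt (fun t => t * (M * exp (t ^ 2)) / 3) 0 r).
  - apply RInt_le; [exact Hr | apply ex_RInt_flux, C0_exp_sq | |].
    { apply ex_RInt_C0, C0_of_derivable. intros t. auto_derive. exact I. }
    intros t Ht. unfold flux.
    assert (Hw : wmean 2 (fun s => M * exp (s ^ 2)) t <= wmean 2 (fun s => M * exp (t ^ 2) + 0 * s ^ 2) t).
    { apply wmean_le; [lra | apply C0_exp_sq | apply C0_of_derivable; intros; auto_derive; exact I |].
      intros s Hs. rewrite Rmult_0_l, Rplus_0_r. apply Rmult_le_compat_l; [exact HM |].
      apply exp_le_exp. nra. }
    rewrite wmean_quadratic in Hw. nra.
  - rewrite (RInt_FTC _ (fun t => M * exp (t ^ 2) / 6)).
    + rewrite pow_i, exp_0 by lia. lra.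
    + intros t. auto_derive; [exact I |]. replace (t * (t * 1)) with (t ^ 2) by ring. field.
    + apply C0_of_derivable. intros t. auto_derive. exact I.
Qed.

Lemma lapinv_exp_bound g M r : Cn 0 g -> (forall t, Rabs (g t) <= M * exp (t ^ 2)) ->
  Rabs (lapinv g r) <= M * exp (r ^ 2) / 6.
Proof.
  assert (Hpos : forall g r, 0 <= r -> Cn 0 g -> (forall t, Rabs (g t) <= M * exp (t ^ 2)) ->
    Rabs (lapinv g r) <= M * exp (r ^ 2) / 6).
  { intros h s Hs Hh Hbound.
    assert (HM : 0 <= M).
    { pose proof (Rabs_pos (h 0)). pose proof (Hbound 0). pose proof (exp_pos (0 ^ 2)). nra. }
    eapply Rle_trans; [apply lapinv_abs_le with (h := fun t => M * exp (t ^ 2)) |];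
      auto using C0_exp_sq, lapinv_exp_sq. }
  intros Hg Hbound. destruct (Rle_or_lt 0 r) as [Hr | Hr]; [apply Hpos; assumption |].
  replace r with (- - r) by ring. rewrite lapinv_opp by exact Hg.
  replace ((- - r) ^ 2) with ((- r) ^ 2) by ring.
  apply Hpos; [lra | apply C0_comp_opp, Hg |].
  intros t. replace (t ^ 2) with ((- t) ^ 2) by ring. apply Hbound.
Qed.

Lemma shifted_lapinv_exp_bound c g M r : Cn 0 g -> (forall t, Rabs (g t) <= M * exp (t ^ 2)) ->
  Rabs (c + lapinv g r) <= (Rabs c + M / 6) * exp (r ^ 2).
Proof.
  intros Hg Hbound. pose proof (lapinv_exp_bound g M r Hg Hbound).
  pose proof (exp_sq_ge_1 r). pose proof (Rabs_triang c (lapinv g r)). pose proof (Rabs_pos c). nra.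
Qed.

(* Chosen so that [lapinv (3 * decay)] is explicit (lemma [lapinv_decay]). *)
Definition decay (t : R) : R := / ((1 + t ^ 2) ^ 2 * sqrt (1 + t ^ 2)).

Lemma one_plus_sq_pos t : 0 < 1 + t ^ 2.
Proof. pose proof (pow2_ge_0 t). lra. Qed.

Lemma sqrt_one_plus_sq_pos t : 0 < sqrt (1 + t ^ 2).
Proof. apply sqrt_lt_R0, one_plus_sq_pos. Qed.

Lemma decay_pos t : 0 < decay t.
Proof.
  unfold decay. pose proof (one_plus_sq_pos t). pose proof (sqrt_one_plus_sq_pos t).
  apply Rinv_0_lt_compat, Rmult_lt_0_compat; [apply pow_lt |]; lra.
Qed.

Lemma C0_decay : Cn 0 decay.
Proof.
  apply C0_of_derivable. intros x. unfold decay.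
  pose proof (one_plus_sq_pos x). pose proof (sqrt_one_plus_sq_pos x).
  auto_derive. replace (x * (x * 1)) with (x ^ 2) by ring.
  repeat split; [lra | apply Rgt_not_eq, Rmult_lt_0_compat; nra].
Qed.

Lemma decay_antitone t r : 0 <= t <= r -> decay r <= decay t.
Proof.
  intros Htr. unfold decay. pose proof (one_plus_sq_pos t). pose proof (sqrt_one_plus_sq_pos t).
  assert (t ^ 2 <= r ^ 2) by nra.
  apply Rinv_le_contravar; [apply Rmult_lt_0_compat; nra |].
  apply Rmult_le_compat; [nra | lra | nra | apply sqrt_le_1_alt; lra].
Qed.

Lemma wmean_decay x : wmean 2 (fun t => 3 * decay t) x = / ((1 + x ^ 2) * sqrt (1 + x ^ 2)).
Proof.
  unfold wmean. rewrite (RInt_FTC _ (fun s => s ^ 3 * / ((1 + (x * s) ^ 2) * sqrt (1 + (x * s) ^ 2)))).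
  - rewrite Rmult_1_r. simpl. ring.
  - intros s. pose proof (one_plus_sq_pos (x * s)). pose proof (sqrt_one_plus_sq_pos (x * s)).
    auto_derive; replace (x * s * (x * s * 1)) with ((x * s) ^ 2) by ring.
    + repeat split; [lra | apply Rgt_not_eq; nra].
    + unfold decay. set (q := sqrt (1 + (x * s) ^ 2)) in *.
      assert (Hq : q * q = 1 + (x * s) ^ 2) by (apply sqrt_sqrt; lra).
      rewrite <- Hq. field_simplify; [| lra ..].
      replace (-3 * s ^ 4 * q * x ^ 2 + 3 * s ^ 2 * q ^ 3) with (3 * s ^ 2 * q * (q * q - (x * s) ^ 2)) by ring.
      rewrite Hq. field. lra.
  - apply Cn_mult; [apply C0_pow |]. apply (C0_comp_scale (fun t => 3 * decay t)), Cn_scal, C0_decay.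
Qed.

Lemma lapinv_decay r : lapinv (fun t => 3 * decay t) r = 1 - / sqrt (1 + r ^ 2).
Proof.
  unfold lapinv. rewrite (RInt_extR _ (fun t => t * / ((1 + t ^ 2) * sqrt (1 + t ^ 2))))
    by (intros t; unfold flux; rewrite wmean_decay; reflexivity).
  rewrite (RInt_FTC _ (fun t => - / sqrt (1 + t ^ 2))).
  - rewrite pow_i, Rplus_0_r, sqrt_1 by lia. field. apply Rgt_not_eq, sqrt_one_plus_sq_pos.
  - intros s. pose proof (one_plus_sq_pos s). pose proof (sqrt_one_plus_sq_pos s).
    auto_derive; replace (s * (s * 1)) with (s ^ 2) by ring.
    + repeat split; lra.
    + set (q := sqrt (1 + s ^ 2)) in *.
      assert (Hq : q * q = 1 + s ^ 2) by (apply sqrt_sqrt; lra).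
      rewrite <- Hq. field. lra.
  - apply Cn_mult; [apply Cn_id |]. apply C0_of_derivable. intros s.
    pose proof (one_plus_sq_pos s). pose proof (sqrt_one_plus_sq_pos s).
    auto_derive. replace (s * (s * 1)) with (s ^ 2) by ring.
    repeat split; [lra | apply Rgt_not_eq; nra].
Qed.

Lemma lapinv_decay_le_1 r : lapinv (fun t => 3 * decay t) r <= 1.
Proof.
  rewrite lapinv_decay. pose proof (Rinv_0_lt_compat _ (sqrt_one_plus_sq_pos r)). lra.
Qed.

Lemma quartic_eventually_neg a b c : 0 < c -> exists r, 0 <= r /\ a + b * r ^ 2 - c * r ^ 4 < 0.
Proof.
  intros Hc. set (X := (Rabs a + Rabs b) / c + 1).
  assert (HcX : c * X = Rabs a + Rabs b + c) by (unfold X; field; lra).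
  assert (HX : 1 <= X).
  { unfold X. pose proof (Rabs_pos a). pose proof (Rabs_pos b).
    pose proof (Rdiv_le_0_compat (Rabs a + Rabs b) c ltac:(lra) Hc). lra. }
  exists (sqrt X). split; [apply sqrt_pos |].
  assert (Hsq : sqrt X ^ 2 = X) by (rewrite <- Rsqr_pow2; apply Rsqr_sqrt; lra).
  replace (sqrt X ^ 4) with ((sqrt X ^ 2) ^ 2) by ring. rewrite Hsq.
  pose proof (Rle_abs a). pose proof (Rle_abs b). pose proof (Rabs_pos a). pose proof (Rabs_pos b).
  nra.
Qed.

Lemma lapinv_le_const g c r : 0 <= r -> Cn 0 g -> (forall t, 0 <= t <= r -> g t <= c) ->
  lapinv g r <= c * r ^ 2 / 6.
Proof. intros. rewrite <- lapinv_const. apply lapinv_le; auto using Cn_const. Qed.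

Lemma lapinv_ge_const g c r : 0 <= r -> Cn 0 g -> (forall t, 0 <= t <= r -> c <= g t) ->
  c * r ^ 2 / 6 <= lapinv g r.
Proof. intros. rewrite <- lapinv_const. apply lapinv_le; auto using Cn_const. Qed.

Section Apriori.

Variables (k eps : R) (u V W Z : R -> R).
Hypotheses (HV : Cn 0 V) (HW : Cn 0 W) (HZ : Cn 0 Z).
Hypothesis u_eq : forall r, u r = k + lapinv V r.
Hypothesis V_eq : forall r, V r = - eps + lapinv W r.
Hypothesis W_eq : forall r, W r = 1 + lapinv Z r.
Hypothesis Z_nonpos : forall r, 0 <= r -> Z r <= 0.
Hypothesis u_pos : forall r, 0 <= r -> 0 < u r.

Lemma W_le_1 r : 0 <= r -> W r <= 1.
Proof.
  intros Hr. rewrite W_eq.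
  pose proof (lapinv_le_const Z 0 r Hr HZ ltac:(intros t Ht; apply Z_nonpos; lra)). lra.
Qed.

Lemma u_le r : 0 <= r -> u r <= k - eps / 6 * r ^ 2 + r ^ 4 / 120.
Proof.
  intros Hr. rewrite u_eq.
  assert (lapinv V r <= lapinv (fun t => - eps + / 6 * t ^ 2) r).
  { apply lapinv_le; auto. { apply C0_of_derivable. intros. auto_derive. exact I. }
    intros t Ht. rewrite V_eq.
    pose proof (lapinv_le_const W 1 t ltac:(lra) HW ltac:(intros s Hs; apply W_le_1; lra)). lra. }
  rewrite lapinv_quadratic in H. lra.
Qed.

(* If [W r = -d < 0] then [W <= -d] on [[r, oo)] and [W <= 1] on [[0, r]]: both are captured by
   the majorant [-d + K decay], whose [lapinv] is explicit, and then [u] becomes negative. *)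
Lemma W_nonneg r : 0 <= r -> 0 <= W r.
Proof.
  intros Hr. destruct (Rle_or_lt 0 (W r)) as [| Hneg]; [assumption | exfalso].
  set (d := - W r). assert (Hd : 0 < d) by (unfold d; lra).
  assert (W_tail : forall t, r <= t -> W t <= - d).
  { intros t Ht. unfold d. rewrite !W_eq. pose proof (lapinv_antitone Z r t HZ Z_nonpos ltac:(lra)). lra. }
  set (K := (1 + d) / decay r).
  assert (HK : 0 < K) by (apply Rdiv_lt_0_compat; [lra | apply decay_pos]).
  assert (W_below : forall t, 0 <= t -> W t <= - d + K / 3 * (3 * decay t)).
  { intros t Ht. destruct (Rle_or_lt t r) as [Htr | Htr].
    - assert (K * decay r = 1 + d) by (unfold K; field; apply Rgt_not_eq, decay_pos).
      pose proof (decay_antitone t r ltac:(lra)). pose proof (W_le_1 t Ht). nra.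
    - pose proof (W_tail t ltac:(lra)). pose proof (decay_pos t). nra. }
  assert (HD : Cn 0 (fun t => 3 * decay t)) by (apply Cn_scal, C0_decay).
  assert (V_below : forall t, 0 <= t -> V t <= (K / 3 - eps) + - d / 6 * t ^ 2).
  { intros t Ht. rewrite V_eq.
    assert (lapinv W t <= lapinv (fun s => - d + K / 3 * (3 * decay s)) t).
    { apply lapinv_le; auto. { apply Cn_plus; [apply Cn_const | apply Cn_scal, HD]. }
      intros s Hs. apply W_below. lra. }
    rewrite lapinv_plus, lapinv_const, lapinv_scal in H by (auto using Cn_const, Cn_scal).
    pose proof (lapinv_decay_le_1 t). nra. }
  destruct (quartic_eventually_neg k ((K / 3 - eps) / 6) (d / 120)) as [x [Hx Hneg']]; [lra |].
  assert (lapinv V x <= lapinv (fun t => (K / 3 - eps) + - d / 6 * t ^ 2) x).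
  { apply lapinv_le; auto. { apply C0_of_derivable. intros. auto_derive. exact I. }
    intros t Ht. apply V_below. lra. }
  rewrite lapinv_quadratic in H. pose proof (u_pos x Hx). rewrite u_eq in H0. lra.
Qed.

Lemma u_ge r : 0 <= r -> k - eps / 6 * r ^ 2 <= u r.
Proof.
  intros Hr. rewrite u_eq.
  assert (- eps * r ^ 2 / 6 <= lapinv V r); [| lra].
  apply lapinv_ge_const; [exact Hr | exact HV |]. intros t Ht. rewrite V_eq.
  pose proof (lapinv_ge_const W 0 t ltac:(lra) HW ltac:(intros s Hs; apply W_nonneg; lra)). lra.
Qed.

Lemma eps_le_sqrt : eps <= sqrt (6 * k / 5).
Proof.
  destruct (Rle_or_lt eps 0) as [Heps | Heps]; [pose proof (sqrt_pos (6 * k / 5)); lra |].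
  set (r := sqrt (10 * eps)).
  assert (Hr2 : r ^ 2 = 10 * eps) by (unfold r; rewrite <- Rsqr_pow2; apply Rsqr_sqrt; lra).
  assert (Hr : 0 <= r) by apply sqrt_pos.
  pose proof (u_le r Hr) as Hle. pose proof (u_pos r Hr).
  replace (r ^ 4) with ((r ^ 2) ^ 2) in Hle by ring. rewrite Hr2 in Hle.
  rewrite <- (sqrt_square eps) by lra. apply sqrt_le_1_alt. nra.
Qed.

Lemma apriori_bounds : eps <= sqrt (6 * k / 5) /\
  forall r, 0 < r -> k - eps / 6 * r ^ 2 <= u r /\ u r <= k - eps / 6 * r ^ 2 + r ^ 4 / 120.
Proof. split; [exact eps_le_sqrt |]. intros r Hr. split; [apply u_ge | apply u_le]; lra. Qed.

End Apriori.

Lemma Cinf_lap f : (forall n, Cn n f) -> Derive f 0 = 0 -> forall n, Cn n (lap f).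
Proof. intros Hf Hf0 n. apply Cn_lap; [apply Hf | exact Hf0]. Qed.

Lemma entire_radial_solution_bounds k eps u : entire_radial_solution k eps u ->
  eps <= sqrt (6 * k / 5) /\
  forall r, 0 < r -> k - eps / 6 * r ^ 2 <= u r /\ u r <= k - eps / 6 * r ^ 2 + r ^ 4 / 120.
Proof.
  intros (Hs & _ & Hpos & Heq & Hu0 & HV0 & HW0 & Hu'0 & HV'0 & HW'0).
  pose proof (proj1 (smooth_iff_Cn u) Hs) as Hu.
  pose proof (Cinf_lap u Hu Hu'0) as HV. pose proof (Cinf_lap _ HV HV'0) as HW.
  pose proof (Cinf_lap _ HW HW'0) as HZ.
  assert (u_eq : forall r, u r = k + lapinv (lap u) r) by (intros r; rewrite <- Hu0; apply lapinv_lap; auto).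
  assert (V_eq : forall r, lap u r = - eps + lapinv (lap (lap u)) r)
    by (intros r; rewrite <- HV0; apply lapinv_lap; auto).
  assert (W_eq : forall r, lap (lap u) r = 1 + lapinv (lap (lap (lap u))) r)
    by (intros r; rewrite <- HW0; apply lapinv_lap; auto).
  assert (Z_nonpos : forall r, 0 <= r -> lap (lap (lap u)) r <= 0).
  { intros r Hr. rewrite Heq by exact Hr.
    pose proof (Rinv_0_lt_compat _ (pow_lt _ 3 (Hpos r Hr))). lra. }
  exact (apriori_bounds k eps u _ _ _ (HV 0%nat) (HW 0%nat) (HZ 0%nat) u_eq V_eq W_eq Z_nonpos Hpos).
Qed.

Definition lapinv3 (a b c : R) (g : R -> R) (r : R) : R :=
  a + lapinv (fun t => b + lapinv (fun s => c + lapinv g s) t) r.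

Lemma Cn_lapinv3 n a b c g : Cn n g -> Cn (S (S (S n))) (lapinv3 a b c g).
Proof. intros Hg. apply Cn_lapinv, Cn_lapinv, Cn_lapinv, Hg. Qed.

Lemma C0_lapinv3 a b c g : Cn 0 g -> Cn 0 (lapinv3 a b c g).
Proof. intros Hg. exact (Cn_C0 _ _ (Cn_lapinv3 0 a b c g Hg)). Qed.

Lemma lapinv3_lipschitz a b c g h M r : Cn 0 g -> Cn 0 h ->
  (forall t, Rabs (g t - h t) <= M * exp (t ^ 2)) ->
  Rabs (lapinv3 a b c g r - lapinv3 a b c h r) <= M / 216 * exp (r ^ 2).
Proof.
  intros Hg Hh Hgh.
  assert (Hdiff : forall c f1 f2 M t, Cn 0 f1 -> Cn 0 f2 ->
    (forall s, Rabs (f1 s - f2 s) <= M * exp (s ^ 2)) ->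
    Rabs ((c + lapinv f1 t) - (c + lapinv f2 t)) <= M / 6 * exp (t ^ 2)).
  { intros c' f1 f2 M' t Hf1 Hf2 Hf.
    replace (c' + lapinv f1 t - (c' + lapinv f2 t)) with (lapinv (fun s => f1 s - f2 s) t)
      by (rewrite lapinv_minus by assumption; ring).
    replace (M' / 6 * exp (t ^ 2)) with (M' * exp (t ^ 2) / 6) by field.
    apply lapinv_exp_bound; [apply Cn_minus |]; assumption. }
  replace (M / 216) with (M / 6 / 6 / 6) by field. unfold lapinv3.
  apply Hdiff; [apply C0_lapinv_shift, C0_lapinv_shift; assumption .. |].
  intros t. apply Hdiff; [apply C0_lapinv_shift; assumption .. |].
  intros s. apply Hdiff; assumption.
Qed.

Lemma lapinv3_exp_bound a b c g M r : Cn 0 g -> (forall t, Rabs (g t) <= M * exp (t ^ 2)) ->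
  Rabs (lapinv3 a b c g r - a) <= (Rabs b + (Rabs c + M / 6) / 6) / 6 * exp (r ^ 2).
Proof.
  intros Hg Hbound. unfold lapinv3.
  replace (a + _ - a) with (lapinv (fun t => b + lapinv (fun s => c + lapinv g s) t) r) by ring.
  replace ((Rabs b + (Rabs c + M / 6) / 6) / 6 * exp (r ^ 2))
    with ((Rabs b + (Rabs c + M / 6) / 6) * exp (r ^ 2) / 6) by field.
  apply lapinv_exp_bound; [apply C0_lapinv_shift, C0_lapinv_shift, Hg |].
  intros t. apply shifted_lapinv_exp_bound; [apply C0_lapinv_shift, Hg |].
  intros s. apply shifted_lapinv_exp_bound; assumption.
Qed.

Lemma lapinv3_even a b c g r : Cn 0 g -> (forall t, g (- t) = g t) ->
  lapinv3 a b c g (- r) = lapinv3 a b c g r.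
Proof.
  intros Hg Heven. unfold lapinv3.
  rewrite lapinv_even; [reflexivity | apply C0_lapinv_shift, C0_lapinv_shift, Hg |].
  intros t. rewrite lapinv_even; [reflexivity | apply C0_lapinv_shift, Hg |].
  intros s. rewrite lapinv_even by assumption. reflexivity.
Qed.

Lemma lapinv3_initial_values a b c g : Cn 0 g ->
  let w := lapinv3 a b c g in
  lap (lap (lap w)) = g /\
  w 0 = a /\ lap w 0 = b /\ lap (lap w) 0 = c /\
  Derive w 0 = 0 /\ Derive (lap w) 0 = 0 /\ Derive (lap (lap w)) 0 = 0.
Proof.
  intros Hg w.
  assert (L1 : lap w = fun t => b + lapinv (fun s => c + lapinv g s) t)
    by (apply lap_lapinv, C0_lapinv_shift, C0_lapinv_shift, Hg).
  assert (L2 : lap (lap w) = fun s => c + lapinv g s) by (rewrite L1; apply lap_lapinv, C0_lapinv_shift, Hg).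
  assert (L3 : lap (lap (lap w)) = g) by (rewrite L2; apply lap_lapinv, Hg).
  unfold w, lapinv3 in *. rewrite L3, L2, L1, !Derive_lapinv, !flux_0, !lapinv_0;
    [| apply Hg | apply C0_lapinv_shift, Hg | apply C0_lapinv_shift, C0_lapinv_shift, Hg].
  repeat split; ring.
Qed.

Lemma entire_radial_solution_of_fixed_point k eps u :
  Cn 0 u -> (forall r, 0 < u r) -> (forall r, u (- r) = u r) ->
  (forall r, u r = lapinv3 k (- eps) 1 (fun t => - / u t ^ 3) r) ->
  entire_radial_solution k eps u.
Proof.
  intros Hu0 Hpos Heven Hfix.
  assert (Hsmooth : forall n, Cn n u).
  { induction n as [| n IH]; [exact Hu0 |].
    apply Cn_S, Cn_S, (Cn_ext _ (lapinv3 k (- eps) 1 (fun t => - / u t ^ 3)));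
      [intros r; symmetry; apply Hfix |].
    apply Cn_lapinv3, Cn_neg_inv_cube; assumption. }
  apply functional_extensionality in Hfix.
  destruct (lapinv3_initial_values k (- eps) 1 _ (Cn_neg_inv_cube 0 u Hu0 Hpos)) as (L3 & Init).
  rewrite <- Hfix in L3, Init.
  split; [apply smooth_iff_Cn, Hsmooth |]. split; [exact Heven |]. split; [intros r _; apply Hpos |].
  split; [intros r _; rewrite L3; reflexivity | exact Init].
Qed.

Lemma C0_Rmax f g : Cn 0 f -> Cn 0 g -> Cn 0 (fun t => Rmax (f t) (g t)).
Proof.
  intros Hf Hg. apply (Cn_ext 0 (fun t => (f t + g t + Rabs (f t - g t)) / 2)).
  - intros t. unfold Rmax. destruct (Rle_dec (f t) (g t));
      [rewrite Rabs_left1 | rewrite Rabs_right]; lra.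
  - apply (Cn_mult 0); [| apply Cn_const]. apply Cn_plus; [apply Cn_plus; assumption |].
    intros x. apply continuous_Rabs_comp, (Cn_minus 0); assumption.
Qed.

Lemma Rmax_lipschitz a b c : Rabs (Rmax a c - Rmax b c) <= Rabs (a - b).
Proof.
  apply Rabs_le_between. pose proof (Rle_abs (a - b)). pose proof (Rle_abs (b - a)).
  rewrite Rabs_minus_sym in H0. unfold Rmax. destruct (Rle_dec a c), (Rle_dec b c); lra.
Qed.

Lemma inv_cube_lipschitz a b c : 0 < c -> c <= a -> c <= b ->
  Rabs (/ a ^ 3 - / b ^ 3) <= 3 * (/ c) ^ 4 * Rabs (a - b).
Proof.
  intros Hc Ha Hb.
  assert (Hp : 0 < / a <= / c) by (split; [apply Rinv_0_lt_compat | apply Rinv_le_contravar]; lra).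
  assert (Hq : 0 < / b <= / c) by (split; [apply Rinv_0_lt_compat | apply Rinv_le_contravar]; lra).
  set (p := / a) in *. set (q := / b) in *. set (w := / c) in *.
  replace (/ a ^ 3 - / b ^ 3) with (- (a - b) * (p * q * (p * p + p * q + q * q))) by (unfold p, q; field; lra).
  rewrite Rabs_mult, Rabs_Ropp, (Rabs_pos_eq (p * q * _)) by (apply Rmult_le_pos; nra).
  rewrite (Rmult_comm (3 * w ^ 4)). apply Rmult_le_compat_l; [apply Rabs_pos |].
  assert (p * q <= w * w) by nra. assert (p * p <= w * w) by nra. assert (q * q <= w * w) by nra.
  assert (p * q * (p * p + p * q + q * q) <= w * w * (w * w + w * w + w * w)) by (apply Rmult_le_compat; nra).
  simpl. nra.
Qed.

(* The truncation at the barrier makes [nonlin k] globally Lipschitz; it is inactive on the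
   solution constructed below (lemma [barrier_le_picard_limit]). *)
Definition barrier (k t : R) : R := k / 2 + t ^ 4 / 480.

Definition nonlin (k : R) (u : R -> R) (t : R) : R := - / Rmax (u t) (barrier k t) ^ 3.

Definition picard (k eps : R) (u : R -> R) : R -> R := lapinv3 k (- eps) 1 (nonlin k u).

Lemma barrier_ge k t : k / 2 <= barrier k t.
Proof. unfold barrier. pose proof (pow2_ge_0 (t ^ 2)). replace (t ^ 4) with ((t ^ 2) ^ 2) by ring. lra. Qed.

Lemma C0_nonlin k u : 0 < k -> Cn 0 u -> Cn 0 (nonlin k u).
Proof.
  intros Hk Hu. apply (Cn_neg_inv_cube 0 (fun t => Rmax (u t) (barrier k t))).
  - apply C0_Rmax; [exact Hu |]. apply C0_of_derivable. intros t. unfold barrier. auto_derive. exact I.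
  - intros t. pose proof (barrier_ge k t). pose proof (Rmax_r (u t) (barrier k t)). lra.
Qed.

Lemma nonlin_abs_le k u t : 0 < k -> Rabs (nonlin k u t) <= / barrier k t ^ 3.
Proof.
  intros Hk. unfold nonlin. pose proof (barrier_ge k t). pose proof (Rmax_r (u t) (barrier k t)).
  rewrite Rabs_Ropp, Rabs_pos_eq by (left; apply Rinv_0_lt_compat, pow_lt; lra).
  apply Rinv_le_contravar; [apply pow_lt; lra | apply pow_incr; lra].
Qed.

Lemma nonlin_lipschitz k u v t : 0 < k ->
  Rabs (nonlin k u t - nonlin k v t) <= 3 * (/ (k / 2)) ^ 4 * Rabs (u t - v t).
Proof.
  intros Hk. unfold nonlin. pose proof (barrier_ge k t).
  pose proof (Rmax_r (u t) (barrier k t)). pose proof (Rmax_r (v t) (barrier k t)).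
  replace (- _ - - _) with (- (/ Rmax (u t) (barrier k t) ^ 3 - / Rmax (v t) (barrier k t) ^ 3)) by ring.
  rewrite Rabs_Ropp. eapply Rle_trans; [apply inv_cube_lipschitz with (c := k / 2); lra |].
  apply Rmult_le_compat_l; [| apply Rmax_lipschitz].
  pose proof (pow_lt (/ (k / 2)) 4 ltac:(apply Rinv_0_lt_compat; lra)). lra.
Qed.

Lemma picard_lipschitz k eps u v M r : 2 <= k -> Cn 0 u -> Cn 0 v ->
  (forall t, Rabs (u t - v t) <= M * exp (t ^ 2)) ->
  Rabs (picard k eps u r - picard k eps v r) <= M / 2 * exp (r ^ 2).
Proof.
  intros Hk Hu Hv Huv. set (L := 3 * (/ (k / 2)) ^ 4).
  assert (HL : 0 <= L <= 3).
  { assert (0 < / (k / 2) <= 1)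
      by (split; [apply Rinv_0_lt_compat | rewrite <- Rinv_1; apply Rinv_le_contravar]; lra).
    pose proof (pow_incr (/ (k / 2)) 1 4 ltac:(lra)). pose proof (pow_le (/ (k / 2)) 4 ltac:(lra)).
    rewrite pow1 in *. unfold L. lra. }
  assert (HM : 0 <= M).
  { pose proof (Rabs_pos (u 0 - v 0)). pose proof (Huv 0). rewrite pow_i, exp_0 in * by lia. lra. }
  unfold picard. eapply Rle_trans.
  { apply lapinv3_lipschitz with (M := L * M); [apply C0_nonlin; auto; lra .. |]. 
    intros t. eapply Rle_trans; [apply nonlin_lipschitz; lra |]. fold L.
    rewrite Rmult_assoc. apply Rmult_le_compat_l; [lra | apply Huv]. }
  pose proof (exp_pos (r ^ 2)). apply Rmult_le_compat_r; [lra |]. nra.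
Qed.

Lemma picard_near_k k eps u r : 2 <= k -> 0 < eps < 1 -> Cn 0 u ->
  Rabs (picard k eps u r - k) <= exp (r ^ 2).
Proof.
  intros Hk Heps Hu. unfold picard. eapply Rle_trans.
  { apply lapinv3_exp_bound with (M := 1); [apply C0_nonlin; auto; lra |].
    intros t. eapply Rle_trans; [apply nonlin_abs_le; lra |]. rewrite Rmult_1_l.
    pose proof (barrier_ge k t). pose proof (exp_sq_ge_1 t).
    assert (/ barrier k t ^ 3 <= / 1 ^ 3) by (apply Rinv_le_contravar; [lra | apply pow_incr; lra]).
    rewrite pow1, Rinv_1 in H1. lra. }
  rewrite Rabs_Ropp, Rabs_R1, Rabs_pos_eq by lra. pose proof (exp_pos (r ^ 2)).
  rewrite <- (Rmult_1_l (exp (r ^ 2))) at 2. apply Rmult_le_compat_r; lra.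
Qed.

(* [k >= 242] is what makes [barrier k t >= 1 + t^2], using [(t^2 - 240)^2 >= 0]. *)
Lemma inv_barrier_cube_le_decay k t : 242 <= k -> / barrier k t ^ 3 <= decay t.
Proof.
  intros Hk. unfold decay.
  assert (Hb : 1 + t ^ 2 <= barrier k t).
  { unfold barrier. pose proof (pow2_ge_0 (t ^ 2 - 240)). replace (t ^ 4) with ((t ^ 2) ^ 2) by ring. nra. }
  pose proof (one_plus_sq_pos t). pose proof (sqrt_one_plus_sq_pos t).
  assert (Hs : sqrt (1 + t ^ 2) <= 1 + t ^ 2).
  { rewrite <- (sqrt_square (1 + t ^ 2)) at 2 by lra. apply sqrt_le_1_alt. nra. }
  apply Rinv_le_contravar; [apply Rmult_lt_0_compat; nra |].
  apply Rle_trans with ((1 + t ^ 2) ^ 3); [| apply pow_incr; lra].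
  replace ((1 + t ^ 2) ^ 3) with ((1 + t ^ 2) ^ 2 * (1 + t ^ 2)) by ring.
  apply Rmult_le_compat_l; [apply pow_le; lra | exact Hs].
Qed.

Lemma picard_ge k eps u r : 242 <= k -> Cn 0 u -> 0 <= r ->
  k - eps * r ^ 2 / 6 + r ^ 4 / 240 <= picard k eps u r.
Proof.
  intros Hk Hu Hr. assert (HN : Cn 0 (nonlin k u)) by (apply C0_nonlin; auto; lra).
  assert (HW : forall s, 0 <= s -> 1 / 2 <= 1 + lapinv (nonlin k u) s).
  { intros s Hs.
    assert (lapinv (fun t => - / 3 * (3 * decay t)) s <= lapinv (nonlin k u) s).
    { apply lapinv_le; [exact Hs | apply Cn_scal, Cn_scal, C0_decay | exact HN |].
      intros t _. pose proof (nonlin_abs_le k u t ltac:(lra)) as Hn.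
      pose proof (inv_barrier_cube_le_decay k t Hk). apply Rabs_le_between in Hn. lra. }
    rewrite lapinv_scal in H by (apply Cn_scal, C0_decay). pose proof (lapinv_decay_le_1 s). lra. }
  unfold picard, lapinv3.
  assert (lapinv (fun t => - eps + / 12 * t ^ 2) r
          <= lapinv (fun t => - eps + lapinv (fun s => 1 + lapinv (nonlin k u) s) t) r).
  { apply lapinv_le; [exact Hr | apply C0_of_derivable; intros; auto_derive; exact I |
      apply C0_lapinv_shift, C0_lapinv_shift, HN |].
    intros t Ht.
    pose proof (lapinv_ge_const _ (1 / 2) t ltac:(lra) (C0_lapinv_shift 1 _ HN) ltac:(intros s Hs; apply HW; lra)).
    lra. }
  rewrite lapinv_quadratic in H. lra.
Qed.

Lemma picard_even k eps u r : 0 < k -> Cn 0 u -> (forall t, u (- t) = u t) ->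
  picard k eps u (- r) = picard k eps u r.
Proof.
  intros Hk Hu Heven. unfold picard. apply lapinv3_even; [apply C0_nonlin; assumption |].
  intros t. unfold nonlin, barrier. rewrite Heven. replace ((- t) ^ 4) with (t ^ 4) by ring. reflexivity.
Qed.

Lemma half_pow_lt e : 0 < e -> exists N, forall n, (N <= n)%nat -> (/ 2) ^ n < e.
Proof.
  intros He. destruct (pow_lt_1_zero (/ 2) ltac:(rewrite Rabs_pos_eq; lra) e He) as [N HN].
  exists N. intros n Hn. specialize (HN n Hn). rewrite Rabs_pos_eq in HN; [exact HN | apply pow_le; lra].
Qed.

Section GeometricSteps.

Variables (a : nat -> R) (C : R).
Hypothesis a_steps : forall n, Rabs (a (S n) - a n) <= C * (/ 2) ^ n.

Lemma geometric_steps_cauchy n p : Rabs (a (n + p)%nat - a n) <= 2 * C * (/ 2) ^ n.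
Proof.
  assert (Hgap : Rabs (a (n + p)%nat - a n) <= 2 * C * (/ 2) ^ n * (1 - (/ 2) ^ p)).
  { induction p as [| p IH].
    - rewrite Nat.add_0_r, Rminus_diag, Rabs_R0. simpl. lra.
    - rewrite Nat.add_succ_r. pose proof (a_steps (n + p)) as Hstep. rewrite pow_add in Hstep.
      pose proof (Rabs_triang (a (S (n + p)) - a (n + p)%nat) (a (n + p)%nat - a n)).
      replace (a (S (n + p)) - a (n + p)%nat + (a (n + p)%nat - a n)) with (a (S (n + p)) - a n) in H by ring.
      simpl. lra. }
  assert (HC : 0 <= C) by (pose proof (a_steps 0); pose proof (Rabs_pos (a 1%nat - a 0%nat)); simpl in *; lra).
  pose proof (pow_le (/ 2) n ltac:(lra)). pose proof (pow_le (/ 2) p ltac:(lra)).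
  assert (0 <= C * (/ 2) ^ n) by (apply Rmult_le_pos; assumption). nra.
Qed.

Lemma geometric_steps_cvg : is_lim_seq a (real (Lim_seq a)).
Proof.
  apply Lim_seq_correct', ex_lim_seq_cauchy_corr. intros e.
  assert (HC : 0 <= C) by (pose proof (a_steps 0); pose proof (Rabs_pos (a 1%nat - a 0%nat)); simpl in *; lra).
  destruct (half_pow_lt (e / (2 * C + 1))) as [N HN]; [apply Rdiv_lt_0_compat; [apply cond_pos | lra] |].
  assert (Hclose : forall n m, (N <= n)%nat -> (n <= m)%nat -> Rabs (a m - a n) < e).
  { intros n m Hn Hm. replace m with (n + (m - n))%nat by lia.
    eapply Rle_lt_trans; [apply geometric_steps_cauchy |].
    specialize (HN n Hn). pose proof (pow_le (/ 2) n ltac:(lra)).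
    apply Rmult_lt_compat_l with (r := 2 * C + 1) in HN; [| lra].
    replace ((2 * C + 1) * (e / (2 * C + 1))) with (pos e) in HN by (field; lra). nra. }
  exists N. intros n m Hn Hm. destruct (Nat.le_ge_cases n m).
  - rewrite Rabs_minus_sym. apply Hclose; assumption.
  - apply Hclose; assumption.
Qed.

Lemma geometric_steps_lim_bound n : Rabs (Lim_seq a - a n) <= 2 * C * (/ 2) ^ n.
Proof.
  pose proof (is_lim_seq_abs _ _ (is_lim_seq_minus' _ _ _ _ geometric_steps_cvg (is_lim_seq_const (a n)))) as Hlim.
  refine (is_lim_seq_le_loc _ _ _ _ _ Hlim (is_lim_seq_const (2 * C * (/ 2) ^ n))).
  exists n. intros p Hp. replace p with (n + (p - n))%nat by lia. apply geometric_steps_cauchy.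
Qed.

End GeometricSteps.

Lemma eq_of_geometric_bound x y C : (forall n, Rabs (x - y) <= C * (/ 2) ^ n) -> x = y.
Proof.
  intros Hbound. apply Rminus_diag_uniq.
  pose proof (is_lim_seq_le (fun _ => Rabs (x - y)) (fun n => C * (/ 2) ^ n) (Rabs (x - y)) (C * 0) Hbound
    (is_lim_seq_const _) (is_lim_seq_scal_l _ C 0 (is_lim_seq_geom (/ 2) ltac:(rewrite Rabs_pos_eq; lra)))) as H.
  simpl in H. rewrite Rmult_0_r in H. apply Rabs_eq_0. pose proof (Rabs_pos (x - y)). lra.
Qed.

Section PicardIteration.

Variables k eps : R.
Hypothesis Hk : 242 <= k.
Hypothesis Heps : 0 < eps < 1.

Definition iterate (n : nat) : R -> R := Nat.iter n (picard k eps) (fun _ => k).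

Definition picard_limit (r : R) : R := Lim_seq (fun n => iterate n r).

Lemma C0_iterate n : Cn 0 (iterate n).
Proof.
  induction n as [| n IH]; [exact (Cn_const 0 k) |].
  change (Cn 0 (picard k eps (iterate n))). apply C0_lapinv3, C0_nonlin; [lra | exact IH].
Qed.

Lemma iterate_step n r : Rabs (iterate (S n) r - iterate n r) <= (/ 2) ^ n * exp (r ^ 2).
Proof.
  revert r. induction n as [| n IH]; intros r.
  - rewrite Rmult_1_l. change (Rabs (picard k eps (fun _ => k) r - k) <= exp (r ^ 2)).
    apply picard_near_k; [lra | exact Heps | exact (Cn_const 0 k)].
  - replace ((/ 2) ^ S n) with ((/ 2) ^ n / 2) by (simpl; field).
    change (iterate (S (S n))) with (picard k eps (iterate (S n))).
    change (iterate (S n)) with (picard k eps (iterate n)) at 2.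
    apply picard_lipschitz; [lra | apply C0_iterate .. | exact IH].
Qed.

Lemma picard_limit_bound n r : Rabs (picard_limit r - iterate n r) <= 2 * exp (r ^ 2) * (/ 2) ^ n.
Proof.
  apply (geometric_steps_lim_bound (fun n => iterate n r) (exp (r ^ 2))).
  intros m. rewrite Rmult_comm. apply iterate_step.
Qed.

Lemma C0_picard_limit : Cn 0 picard_limit.
Proof.
  intros x. apply continuity_pt_filterlim.
  set (C := exp ((Rabs x + 1) ^ 2)).
  assert (HC : 0 < C) by apply exp_pos.
  apply (CVU_continuity iterate picard_limit x (mkposreal 1 Rlt_0_1)).
  - intros e He. destruct (half_pow_lt (e / (2 * C))) as [N HN]; [apply Rdiv_lt_0_compat; lra |].
    exists N. intros n y Hn Hy. unfold Boule in Hy. simpl in Hy.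
    assert (Hexp : exp (y ^ 2) <= C).
    { apply exp_le_exp. rewrite <- (pow2_abs y). pose proof (Rabs_triang_inv y x). pose proof (Rabs_pos y). nra. }
    eapply Rle_lt_trans; [apply picard_limit_bound |].
    specialize (HN n Hn). pose proof (pow_lt (/ 2) n ltac:(lra)).
    apply Rmult_lt_compat_l with (r := 2 * C) in HN; [| lra].
    replace (2 * C * (e / (2 * C))) with e in HN by (field; lra). nra.
  - intros n y _. apply continuity_pt_filterlim, C0_iterate.
  - unfold Boule. rewrite Rminus_diag, Rabs_R0. simpl. lra.
Qed.

Lemma picard_limit_fixed r : picard k eps picard_limit r = picard_limit r.
Proof.
  apply eq_of_geometric_bound with (C := 2 * exp (r ^ 2)). intros n.
  assert (Hnear : Rabs (picard k eps picard_limit r - iterate (S n) r) <= 2 * (/ 2) ^ n / 2 * exp (r ^ 2)).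
  { apply picard_lipschitz; [lra | apply C0_picard_limit | apply C0_iterate |].
    intros t. replace (2 * (/ 2) ^ n * exp (t ^ 2)) with (2 * exp (t ^ 2) * (/ 2) ^ n) by ring.
    apply picard_limit_bound. }
  pose proof (picard_limit_bound (S n) r) as Hfar. rewrite Rabs_minus_sym in Hfar.
  change ((/ 2) ^ S n) with (/ 2 * (/ 2) ^ n) in Hfar.
  pose proof (Rabs_triang (picard k eps picard_limit r - iterate (S n) r) (iterate (S n) r - picard_limit r)).
  replace (picard k eps picard_limit r - iterate (S n) r + (iterate (S n) r - picard_limit r))
    with (picard k eps picard_limit r - picard_limit r) in H by ring.
  lra.
Qed.

Lemma picard_limit_even r : picard_limit (- r) = picard_limit r.
Proof.
  unfold picard_limit. f_equal. apply Lim_seq_ext. intros n. revert r.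
  induction n as [| n IH]; intros r; [reflexivity |].
  apply picard_even; [lra | apply C0_iterate | exact IH].
Qed.

Lemma barrier_le_picard_limit t : barrier k t <= picard_limit t.
Proof.
  assert (Hpos : forall t, 0 <= t -> barrier k t <= picard_limit t).
  { intros s Hs. rewrite <- picard_limit_fixed.
    eapply Rle_trans; [| apply picard_ge; [exact Hk | apply C0_picard_limit | exact Hs]].
    (* The gap is [k/2 - 10 eps^2/3 + (s^2 - 40 eps)^2 / 480]. *)
    unfold barrier. pose proof (pow2_ge_0 (s ^ 2 - 40 * eps)).
    replace (s ^ 4) with ((s ^ 2) ^ 2) by ring. nra. }
  destruct (Rle_or_lt 0 t) as [Ht | Ht]; [apply Hpos, Ht |].
  rewrite <- (Ropp_involutive t), picard_limit_even.
  unfold barrier. replace ((- - t) ^ 4) with ((- t) ^ 4) by ring. apply Hpos. lra.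
Qed.

End PicardIteration.

Lemma entire_radial_solution_exists k eps : 242 <= k -> 0 < eps < 1 ->
  exists u, entire_radial_solution k eps u.
Proof.
  intros Hk Heps. exists (picard_limit k eps).
  assert (Hpos : forall r, 0 < picard_limit k eps r).
  { intros r. pose proof (barrier_le_picard_limit k eps Hk Heps r). pose proof (barrier_ge k r). lra. }
  apply entire_radial_solution_of_fixed_point.
  - apply C0_picard_limit; assumption.
  - exact Hpos.
  - apply picard_limit_even; assumption.
  - intros r. rewrite <- (picard_limit_fixed k eps Hk Heps r). unfold picard.
    f_equal. apply functional_extensionality. intros t. unfold nonlin.
    rewrite Rmax_left by (apply barrier_le_picard_limit; assumption). reflexivity.
Qed.

Theorem lemma2 :
  exists k0 : R, 0 < k0 /\
    forall k : R, k0 <= k ->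
      (forall eps : R, 0 < eps < 1 ->
         exists u : R -> R, entire_radial_solution k eps u) /\
      (forall (eps : R) (u : R -> R), entire_radial_solution k eps u ->
         eps <= sqrt (6 * k / 5) /\
         forall r : R, 0 < r ->
           k - eps / 6 * r ^ 2 <= u r /\
           u r <= k - eps / 6 * r ^ 2 + r ^ 4 / 120).
Proof.
  exists 242. split; [lra |]. intros k Hk. split.
  - intros eps Heps. apply entire_radial_solution_exists; assumption.
  - intros eps u Hu. apply entire_radial_solution_bounds, Hu.
Qed.
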